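(* Let $G$ be a connected bipartite graph on $n$ vertices and $m$ edges with incidence matrix $M$, and let $J=[(-1)^{d(i,j)}]$ be the $n\times n$ matrix whose $(i,j)$-entry is $(-1)^{d(i,j)}$. Then $M^+J=O_{m,n}$ and $J^2=nJ$.
   Context: The incidence matrix $M$ is the $n\times m$ matrix with $(i,j)$-entry $1$ if vertex $i$ is incident with edge $e_j$ and $0$ otherwise; $M^+$ is its Moore-Penrose inverse (the unique matrix with $MM^+M=M$, $M^+MM^+=M^+$, $(MM^+)^T=MM^+$, $(M^+M)^T=M^+M$). $d(i,j)$ is the graph distance; $O_{m,n}$ is the $m\times n$ zero matrix. *)

From HB Require Import structures.
From mathcomp Require Import all_boot all_order all_algebra.
Set Implicit Arguments. Unset Strict Implicit. Unset Printing Implicit Defensive.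
Import Order.TTheory GRing.Theory Num.Theory.
Local Open Scope ring_scope.

Definition simple_edges (n m : nat) (ends : 'I_m -> 'I_n * 'I_n) : Prop :=
  (forall j, (ends j).1 != (ends j).2) /\
  (forall j k, j != k ->
     ~ ((ends j).1 == (ends k).1 /\ (ends j).2 == (ends k).2 \/
        (ends j).1 == (ends k).2 /\ (ends j).2 == (ends k).1)).

Definition adj (n m : nat) (ends : 'I_m -> 'I_n * 'I_n) (u v : 'I_n) : bool :=
  [exists j, ((ends j).1 == u) && ((ends j).2 == v)
          || ((ends j).1 == v) && ((ends j).2 == u)].

Fixpoint walk (n m : nat) (ends : 'I_m -> 'I_n * 'I_n) (k : nat) (u v : 'I_n)
  : bool :=
  match k with
  | 0 => u == v
  | k'.+1 => [exists w, adj ends u w && walk ends k' w v]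
  end.

Definition connected_graph (n m : nat) (ends : 'I_m -> 'I_n * 'I_n) : Prop :=
  forall u v : 'I_n, exists k, walk ends k u v.

Definition bipartite_graph (n m : nat) (ends : 'I_m -> 'I_n * 'I_n) : Prop :=
  exists c : 'I_n -> bool, forall u v, adj ends u v -> c u != c v.

(* graph distance: least k < n with a walk of length k from u to v
   (in a connected graph on n vertices such k always exists) *)
Definition dist (n m : nat) (ends : 'I_m -> 'I_n * 'I_n) (u v : 'I_n) : nat :=
  find (fun k => walk ends k u v) (iota 0 n).

Definition incidence (R : nzRingType) (n m : nat) (ends : 'I_m -> 'I_n * 'I_n)
  : 'M[R]_(n, m) :=
  \matrix_(i < n, j < m) (if (i == (ends j).1) || (i == (ends j).2) then 1 else 0).

Definition Jmat (R : nzRingType) (n m : nat) (ends : 'I_m -> 'I_n * 'I_n)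
  : 'M[R]_n :=
  \matrix_(i < n, j < n) ((-1) ^+ dist ends i j).

Definition is_MP_inverse (R : nzRingType) (p q : nat) (A : 'M[R]_(p, q))
  (X : 'M[R]_(q, p)) : Prop :=
  [/\ A *m X *m A = A, X *m A *m X = X,
      (A *m X)^T = A *m X & (X *m A)^T = X *m A].

From HB Require Import structures.
From mathcomp Require Import all_boot all_order all_algebra.
Import Order.TTheory GRing.Theory Num.Theory.
Local Open Scope ring_scope.
Set Implicit Arguments. Unset Strict Implicit.

(* A proper 2-colouring c of a connected bipartite graph gives
   (-1)^d(i,j) = s_i s_j with s = ((-1)^(c i))_i, i.e. J = s s^T, and s^T s = n
   yields J^2 = n J.  The ends of every edge carry opposite signs, so M^T s = 0,
   and the Moore-Penrose identity M^+ = M^+ (M^+)^T M^T carries this to M^+ s = 0. *)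

Section Walks.
Variables (n m : nat) (ends : 'I_m -> 'I_n * 'I_n).

Lemma walk_path k u v : walk ends k u v ->
  exists p, [/\ size p = k, path (adj ends) u p & last u p = v].
Proof.
elim: k u => [|k IHk] u /=; first by move/eqP=> ->; exists [::].
case/existsP=> w /andP[adj_uw /IHk[p [<- pw <-]]].
by exists (w :: p); rewrite /= adj_uw pw.
Qed.

Lemma path_walk p u : path (adj ends) u p -> walk ends (size p) u (last u p).
Proof.
elim: p u => [|w p IHp] u //= /andP[adj_uw pw].
by apply/existsP; exists w; rewrite adj_uw IHp.
Qed.

Lemma walk_shorten k u v :
  walk ends k u v -> exists2 k', (k' < n)%N & walk ends k' u v.
Proof.
case/walk_path=> p [_ pu <-]; case: (shortenP pu) => p' pu' uniq_p' _.
exists (size p'); last exact: path_walk.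
by have := max_card (mem (u :: p')); rewrite (card_uniqP uniq_p') card_ord.
Qed.

Lemma dist_walk : connected_graph ends -> forall u v, walk ends (dist ends u v) u v.
Proof.
move=> conn u v; have [k /walk_shorten[k' lt_k'n walk_k']] := conn u v.
have has_walk : has (fun k => walk ends k u v) (iota 0 n).
  by apply/hasP; exists k'; rewrite ?mem_iota.
have := nth_find 0%N has_walk; rewrite /dist nth_iota //.
by move: has_walk; rewrite has_find size_iota.
Qed.

Variable c : 'I_n -> bool.
Hypothesis c_proper : forall u v, adj ends u v -> c u != c v.

Lemma walk_parity k u v : walk ends k u v -> c v = c u (+) odd k.
Proof.
elim: k u => [|k IHk] u /=; first by move/eqP=> ->; rewrite addbF.
case/existsP=> w /andP[/c_proper cuw /IHk ->].
by move: cuw; case: (c u); case: (c w); case: (odd k).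
Qed.

End Walks.

Section SignVector.
Variables (R : nzRingType) (n m : nat) (ends : 'I_m -> 'I_n * 'I_n).
Variable c : 'I_n -> bool.
Hypothesis c_proper : forall u v, adj ends u v -> c u != c v.

Definition signcol : 'cV[R]_n := \col_i (-1) ^+ c i.

Lemma Jmat_signcol : connected_graph ends -> Jmat R ends = signcol *m signcol^T.
Proof.
move=> conn; apply/matrixP=> i j; rewrite !mxE big_ord1 !mxE.
rewrite (walk_parity c_proper (dist_walk conn i j)) signr_addb signr_odd.
by rewrite mulrA -expr2 sqrr_sign mul1r.
Qed.

Lemma tr_signcol_mul : signcol^T *m signcol = n%:R%:M.
Proof.
apply/matrixP=> i j; rewrite !mxE (ord1 i) (ord1 j) eqxx /=.
under eq_bigr do rewrite !mxE -expr2 sqrr_sign.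
by rewrite sumr_const card_ord.
Qed.

Lemma tr_incidence_signcol : (incidence R ends)^T *m signcol = 0.
Proof.
apply/matrixP=> e k; rewrite !mxE.
set a := (ends e).1; set b := (ends e).2.
have c_ab : c a != c b by apply/c_proper/existsP; exists e; rewrite !eqxx.
have neq_ab : a != b by apply: contra c_ab => /eqP ->.
rewrite (bigD1 a) //= (bigD1 b) 1?eq_sym //= big1 => [|i /andP[ia ib]]; last first.
  by rewrite !mxE (negbTE ia) (negbTE ib) mul0r.
rewrite !mxE eqxx [b == a]eq_sym (negbTE neq_ab) eqxx orbT !mul1r addr0.
by move: c_ab; case: (c a); case: (c b); rewrite /= ?expr0 ?expr1 ?subrr ?addNr.
Qed.

End SignVector.

Lemma MP_inverse_mulmx_eq0 (R : comNzRingType) p q (A : 'M[R]_(p, q))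
    (X : 'M[R]_(q, p)) r (v : 'M[R]_(p, r)) :
  is_MP_inverse A X -> A^T *m v = 0 -> X *m v = 0.
Proof.
case=> _ XAX AX_sym _ Av0.
by rewrite -XAX -mulmxA -AX_sym trmx_mul -!mulmxA Av0 !mulmx0.
Qed.

Theorem mainTheorem8 (R : realFieldType) (n m : nat)
  (ends : 'I_m -> 'I_n * 'I_n) :
  simple_edges ends -> connected_graph ends -> bipartite_graph ends ->
  (forall Mp : 'M[R]_(m, n), is_MP_inverse (incidence R ends) Mp ->
     Mp *m Jmat R ends = 0) /\
  Jmat R ends *m Jmat R ends = n%:R *: Jmat R ends.
Proof.
move=> _ conn [c c_proper]; rewrite (Jmat_signcol R c_proper conn).
split=> [Mp MP_Mp|].
  have Mp_s := MP_inverse_mulmx_eq0 MP_Mp (tr_incidence_signcol R c_proper).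
  by rewrite mulmxA Mp_s mul0mx.
by rewrite mulmxA -(mulmxA (signcol R c)) tr_signcol_mul mul_mx_scalar scalemxAl.
Qed.
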